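(* Let $n\ge1$ and let $G_n$ be any benzenoid chain of length $n$. Then $\Psi(G_n)\le\Psi(L_n)$.
   Context: A matching of a graph is a set of pairwise vertex-disjoint edges; it is maximal if it is not a proper subset of another matching. $\Psi(G)$ is the number of maximal matchings of $G$. A benzenoid system is a connected plane graph without cut-vertices in which every bounded face is a hexagon, any two hexagonal faces being either disjoint or sharing exactly one edge (then they are adjacent). It is catacondensed if no vertex lies in three hexagons, and a benzenoid chain if moreover no hexagon is adjacent to three other hexagons; its length is its number of hexagons. In a chain, the two hexagons adjacent to only one other hexagon are terminal, the rest interior. An interior hexagon has exactly two vertices of degree 2; it is straight if these are non-adjacent. $L_n$ (polyacene) is the benzenoid chain of length $n$ all of whose interior hexagons are straight. *)

From mathcomp Require Import all_boot.
Set Implicit Arguments. Unset Strict Implicit. Unset Printing Implicit Defensive.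

(* A graph is given by a duplicate-free list E of edges (pairs of vertices).
   Edges are identified with their indices in E, i.e. elements of 'I_(size E). *)

Definition edge_of (E : seq (nat * nat)) (i : 'I_(size E)) : nat * nat :=
  nth (0, 0) E i.

Definition vdisjoint (e f : nat * nat) : bool :=
  [&& e.1 != f.1, e.1 != f.2, e.2 != f.1 & e.2 != f.2].

Definition is_matching (E : seq (nat * nat)) (M : {set 'I_(size E)}) : bool :=
  [forall i in M, forall j in M, (i != j) ==> vdisjoint (edge_of i) (edge_of j)].

Definition is_maximal_matching (E : seq (nat * nat)) (M : {set 'I_(size E)}) : bool :=
  is_matching M && [forall M' : {set 'I_(size E)}, (M \proper M') ==> ~~ is_matching M'].

Definition Psi (E : seq (nat * nat)) : nat :=
  #|[set M : {set 'I_(size E)} | is_maximal_matching M]|.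

(* Annelation type of an interior hexagon: the edge shared with the next
   hexagon is opposite to the edge shared with the previous one (Straight),
   or at one of the two non-adjacent, non-opposite positions (kinks). *)
Inductive annel := Straight | KinkL | KinkR.

Definition hex0_edges : seq (nat * nat) :=
  [:: (0, 1); (1, 2); (2, 3); (3, 4); (4, 5); (5, 0)].

(* new hexagon glued along the edge {x,y} of the previous hexagon, with
   fresh vertices k, k+1, k+2, k+3; its boundary cycle is x,k,k+1,k+2,k+3,y *)
Definition hex_edges (x y k : nat) : seq (nat * nat) :=
  [:: (x, k); (k, k.+1); (k.+1, k.+2); (k.+2, k.+3); (k.+3, y)].

(* edge of the hexagon with fresh vertices k..k+3 (glued along {x,y}) along
   which the next hexagon is glued; the shared edges are never adjacent *)
Definition next_edge (a : annel) (k : nat) : nat * nat :=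
  match a with
  | Straight => (k.+1, k.+2)
  | KinkL => (k, k.+1)
  | KinkR => (k.+2, k.+3)
  end.

(* hexagons 2,...,n, glued successively; ws lists the annelation types of the
   interior hexagons, the last glued hexagon is terminal *)
Fixpoint tail_edges (ws : seq annel) (x y k : nat) : seq (nat * nat) :=
  match ws with
  | [::] => hex_edges x y k
  | w :: ws' =>
      hex_edges x y k ++ tail_edges ws' (next_edge w k).1 (next_edge w k).2 (k + 4)
  end.

(* The benzenoid chain with n hexagons whose interior hexagons 2..n-1 have
   annelation types ws (size ws = n - 2). *)
Definition chain_edges (n : nat) (ws : seq annel) : seq (nat * nat) :=
  hex0_edges ++ (if n <= 1 then [::] else tail_edges ws 0 1 6).

Definition polyacene (n : nat) : seq (nat * nat) :=
  chain_edges n (nseq (n - 2) Straight).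

From mathcomp Require Import all_boot zify.
From Stdlib Require List.
Set Implicit Arguments. Unset Strict Implicit. Unset Printing Implicit Defensive.

(* A maximal matching can be built by deciding edge by edge whether to take
   it, an edge left out being required to touch the matching in the end.
   Going through a benzenoid chain hexagon by hexagon, all the rest of the
   chain sees of the choices made so far is the gluing edge [x, y]: which of
   x and y are covered and what is still required of them.  Up to states with
   equal counts there are nine such interfaces, so for n >= 2, Psi(G_n) is
   <start, T_w1 ... T_w(n-2) terminal> for three explicit nonnegative 9x9
   transfer matrices indexed by the annelation types.  The transposed matrices
   map a polyhedral cone of weights into itself, the cone contains [start],
   and for u in it <u, T_w L> <= <u, T_Straight L> whenever L is the vector of
   a polyacene tail; replacing the first annelation by a straight one and
   inducting gives the theorem.  That inequality is a comparison of
   coefficients after three more straight steps, L being symmetric in x and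
   y, and a direct computation for shorter tails. *)

Definition vset := nat -> bool.
Definition demand := vset -> bool.

Fixpoint leaves (E : seq (nat * nat)) (C : vset) (D : demand) : seq (vset * demand) :=
  match E with
  | [::] => [:: (C, D)]
  | e :: E' =>
      (if ~~ C e.1 && ~~ C e.2
       then leaves E' (fun v => C v || (v == e.1) || (v == e.2)) D else [::])
      ++ leaves E' C (fun G => D G && (G e.1 || G e.2))
  end.

Definition accepted E C D := count (fun l : vset * demand => l.2 l.1) (leaves E C D).

Lemma leaves_cat E1 E2 C D :
  leaves (E1 ++ E2) C D = flatten [seq leaves E2 l.1 l.2 | l <- leaves E1 C D].
Proof.
elim: E1 C D => [|e E1 IH] C D /=; first by rewrite cats0.
by rewrite map_cat flatten_cat !IH; case: ifP.
Qed.

Lemma accepted_cat E1 E2 C D :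
  accepted (E1 ++ E2) C D = sumn [seq accepted E2 l.1 l.2 | l <- leaves E1 C D].
Proof.
rewrite /accepted leaves_cat.
by elim: (leaves E1 C D) => //= l s IH; rewrite count_cat IH.
Qed.

Definition avoids (C : vset) (e : nat * nat) := ~~ C e.1 && ~~ C e.2.
Definition touches (v : nat) (e : nat * nat) := (v == e.1) || (v == e.2).

(* The branch of [leaves] selected by the mask [m] of chosen edges. *)
Fixpoint accepting (E : seq (nat * nat)) (C : vset) (D : demand) (m : bitseq) : bool :=
  match E, m with
  | [::], [::] => D C
  | e :: E', b :: m' =>
      if b then avoids C e && accepting E' (fun v => C v || (v == e.1) || (v == e.2)) D m'
      else accepting E' C (fun G => D G && (G e.1 || G e.2)) m'
  | _, _ => false
  end.

Fixpoint bitseqs n : seq bitseq :=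
  if n is n'.+1 then map (cons true) (bitseqs n') ++ map (cons false) (bitseqs n')
  else [:: [::]].

Lemma accepted_bitseqs E C D : accepted E C D = count (accepting E C D) (bitseqs (size E)).
Proof.
rewrite /accepted; elim: E C D => [|e E IH] C D /=; first by rewrite addn0.
rewrite !count_cat !count_map -/(avoids C e) IH; congr (_ + _).
by case: (avoids C e); rewrite /= ?IH // (@eq_count _ _ pred0) ?count_pred0.
Qed.

Definition cover_of (C : vset) (m : bitseq) (E : seq (nat * nat)) : vset :=
  fun v => C v || has (touches v) (mask m E).

Definition extensional (D : demand) := forall G G', G =1 G' -> D G = D G'.

Lemma vdisjointC e f : vdisjoint e f = vdisjoint f e.
Proof. by rewrite /vdisjoint !(eq_sym e.1) !(eq_sym e.2) [X in _ && X]andbCA. Qed.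

Lemma accepting_spec E C D m : extensional D -> size m = size E ->
  accepting E C D m = [&& pairwise vdisjoint (mask m E), all (avoids C) (mask m E),
                     all (fun e => cover_of C m E e.1 || cover_of C m E e.2)
                         (mask (map negb m) E)
                   & D (cover_of C m E)].
Proof.
elim: E C D m => [|e E IH] C D [|b m] hD //= hs.
  by rewrite (hD _ C) // => v; rewrite /cover_of orbF.
case: hs => hs; case: b => /=; last first.
  rewrite IH //; last by move=> G G' hG; rewrite (hD _ _ hG) !hG.
  rewrite (_ : cover_of C (false :: m) (e :: E) = cover_of C m E) //.
  by case: (pairwise _ _); case: (all (avoids C) _); case: (all _ _); case: (D _);
     case: (_ || _).
rewrite IH //; set F := cover_of _ m E.
have hF : F =1 cover_of C (true :: m) (e :: E).
  by move=> v; rewrite /F /cover_of /= /touches !orbA.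
rewrite (hD _ _ hF) (eq_all (a1 := fun f => F f.1 || F f.2)
  (a2 := fun f => cover_of C (true :: m) (e :: E) f.1 || cover_of C (true :: m) (e :: E) f.2));
  last by move=> f /=; rewrite -!hF.
have -> : all (avoids (fun v => C v || (v == e.1) || (v == e.2))) (mask m E) =
          all (vdisjoint e) (mask m E) && all (avoids C) (mask m E).
  rewrite -all_predI; apply: eq_all => f /=; rewrite /avoids vdisjointC /vdisjoint.
  by case: (C f.1); case: (C f.2); case: (f.1 == e.1); case: (f.1 == e.2);
     case: (f.2 == e.1); case: (f.2 == e.2).
by case: (avoids C e); case: (all (vdisjoint e) _); case: (all (avoids C) _);
   rewrite /= ?andbF.
Qed.

Definition mask_of n (M : {set 'I_n}) : bitseq := [seq i \in M | i <- enum 'I_n].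

Lemma map_edge_of_enum E : map (@edge_of E) (enum 'I_(size E)) = E.
Proof.
rewrite (_ : @edge_of E = nth (0, 0) E \o val) // map_comp val_enum_ord.
by rewrite -/(mkseq _ _) mkseq_nth.
Qed.

Lemma mask_of_edges E (M : {set 'I_(size E)}) :
  mask (mask_of M) E = map (@edge_of E) [seq i <- enum 'I_(size E) | i \in M].
Proof. by rewrite filter_mask map_mask map_edge_of_enum. Qed.

Lemma mask_of_edgesN E (M : {set 'I_(size E)}) :
  mask (map negb (mask_of M)) E = map (@edge_of E) [seq i <- enum 'I_(size E) | i \notin M].
Proof. by rewrite -map_comp filter_mask map_mask map_edge_of_enum. Qed.

Lemma mem_filter_enum n (A : pred 'I_n) i : (i \in [seq j <- enum 'I_n | A j]) = A i.
Proof. by rewrite mem_filter mem_enum andbT. Qed.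

Lemma pairwise_eqU (T : eqType) (r : rel T) s :
  uniq s -> pairwise (fun x y => (x == y) || r x y) s = pairwise r s.
Proof.
elim: s => //= x s IH /andP [xs us]; rewrite IH //; congr (_ && _).
by apply: eq_in_all => y ys; case: eqP ys xs => // ->->.
Qed.

Lemma is_matching_mask E (M : {set 'I_(size E)}) :
  is_matching M = pairwise vdisjoint (mask (mask_of M) E).
Proof.
rewrite mask_of_edges pairwise_map -pairwise_eqU; last exact/filter_uniq/enum_uniq.
rewrite pairwise_all2rel => [|i|i j]; last 2 first.
- by rewrite eqxx.
- by rewrite /= eq_sym vdisjointC.
apply/forall_inP/allrelP => [H i j | H i iM].
  rewrite !mem_filter_enum => iM jM.
  by have := forall_inP (H i iM) j jM; case: eqP.
apply/forall_inP => j jM; apply/implyP => /negbTE ij.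
by have := H i j; rewrite !mem_filter_enum ij => /(_ iM jM).
Qed.

Lemma touches_vdisjoint e f : (touches e.1 f || touches e.2 f) = ~~ vdisjoint e f.
Proof. by rewrite /touches /vdisjoint !negb_and !negbK !orbA. Qed.

Lemma dominated_mask E (M : {set 'I_(size E)}) :
  all (fun e => cover_of xpred0 (mask_of M) E e.1 || cover_of xpred0 (mask_of M) E e.2)
      (mask (map negb (mask_of M)) E) =
  [forall i, (i \notin M) ==> [exists j in M, ~~ vdisjoint (edge_of i) (edge_of j)]].
Proof.
rewrite mask_of_edgesN all_map; apply/allP/forallP => H i.
  apply/implyP => iM; have /= := H i; rewrite mem_filter_enum => /(_ iM).
  rewrite /cover_of /= -has_predU mask_of_edges has_map.
  case/hasP => j; rewrite mem_filter_enum /= touches_vdisjoint => jM ij.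
  by apply/exists_inP; exists j.
rewrite mem_filter_enum => iM /=; have /exists_inP [j jM ij] := implyP (H i) iM.
rewrite /cover_of /= -has_predU mask_of_edges has_map; apply/hasP.
by exists j; rewrite ?mem_filter_enum //= touches_vdisjoint.
Qed.

Lemma maximal_dominated E (M : {set 'I_(size E)}) : is_matching M ->
  [forall M' : {set 'I_(size E)}, (M \proper M') ==> ~~ is_matching M'] =
  [forall i, (i \notin M) ==> [exists j in M, ~~ vdisjoint (edge_of i) (edge_of j)]].
Proof.
move=> hM; apply/forallP/forallP => H i.
  apply/implyP => iM; apply: contraT; rewrite negb_exists_in => /forall_inP hv.
  have hMi : is_matching (i |: M).
    apply/forall_inP => a /setU1P [->|aM]; apply/forall_inP => b /setU1P [->|bM];
      apply/implyP => ab.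
    - by rewrite eqxx in ab.
    - exact/negbNE/hv.
    - by rewrite vdisjointC; apply/negbNE/hv.
    - exact: (implyP (forall_inP (forall_inP hM a aM) b bM)).
  by have := H (i |: M); rewrite properUr ?sub1set // hMi.
move: i => M'; apply/implyP => /properP [sMM' [j jM' jM]]; apply/negP => hM'.
have /exists_inP [k kM /negP[]] := implyP (H j) jM.
have jk : j != k by apply: contraNneq jM => ->.
exact: (implyP (forall_inP (forall_inP hM' j jM') k (subsetP sMM' k kM)) jk).
Qed.

Lemma maximal_accepting E (M : {set 'I_(size E)}) :
  is_maximal_matching M = accepting E xpred0 xpredT (mask_of M).
Proof.
rewrite accepting_spec //; last by rewrite size_map size_enum_ord.
rewrite -is_matching_mask dominated_mask (@eq_all _ _ predT) ?all_predT // andbT.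
by rewrite /is_maximal_matching; case hM: (is_matching M) => //=; apply: maximal_dominated.
Qed.

Lemma mem_bitseqs n s : (s \in bitseqs n) = (size s == n).
Proof.
have cons_inj (b : bool) : injective (cons b) by move=> x y [].
elim: n s => [|n IH] [|b s] //=; rewrite mem_cat.
  by apply/negP => /orP [] /mapP [].
rewrite eqSS -IH; case: b.
  by rewrite (mem_map (cons_inj true)); case: mapP => [[x _ []]|] /=; rewrite ?orbF.
by rewrite (mem_map (cons_inj false)); case: mapP => [[x _ []]|].
Qed.

Lemma uniq_bitseqs n : uniq (bitseqs n).
Proof.
elim: n => //= n IH; rewrite cat_uniq !map_inj_uniq ?IH //=; try by move=> x y [].
by rewrite andbT; apply/hasPn => _ /mapP [s _ ->]; apply/mapP => - [].
Qed.

Lemma nth_mask_of n (M : {set 'I_n}) (i : 'I_n) : nth false (mask_of M) i = (i \in M).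
Proof. by rewrite (nth_map i) ?nth_ord_enum // size_enum_ord. Qed.

Lemma mask_of_inj n : injective (@mask_of n).
Proof.
by move=> M1 M2 h; apply/setP => i; have := congr1 (nth false ^~ i) h; rewrite !nth_mask_of.
Qed.

Lemma card_mask_of n (P : pred bitseq) :
  #|[set M : {set 'I_n} | P (mask_of M)]| = count P (bitseqs n).
Proof.
rewrite cardE /enum_mem size_filter -enumT (@eq_count _ _ (P \o @mask_of n)); last first.
  by move=> M; rewrite /= inE.
rewrite -count_map; apply/permP/uniq_perm.
- by rewrite map_inj_uniq ?enum_uniq //; exact: mask_of_inj.
- exact: uniq_bitseqs.
move=> s; rewrite mem_bitseqs; apply/mapP/eqP => [[M _ ->]|hs].
  by rewrite size_map size_enum_ord.
exists [set i : 'I_n | nth false s i]; first by rewrite mem_enum.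
apply: (@eq_from_nth _ false); first by rewrite size_map size_enum_ord.
move=> i; rewrite hs => hi.
by have := nth_mask_of [set j : 'I_n | nth false s j] (Ordinal hi); rewrite /= inE => ->.
Qed.

Lemma Psi_accepted E : Psi E = accepted E xpred0 xpredT.
Proof.
rewrite accepted_bitseqs /Psi -card_mask_of.
by apply: eq_card => M; rewrite !inE maximal_accepting.
Qed.

Lemma Forall2_sumn A B (R : A -> B -> Prop) (f : A -> nat) (g : B -> nat) s t :
  (forall a b, R a b -> f a = g b) -> List.Forall2 R s t ->
  sumn (map f s) = sumn (map g t).
Proof. by move=> fg; elim=> //= a b s' t' /fg -> _ ->. Qed.

Lemma Forall2_count A B (R : A -> B -> Prop) (f : pred A) (g : pred B) s t :
  (forall a b, R a b -> f a = g b) -> List.Forall2 R s t ->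
  count f s = count g t.
Proof. by move=> fg; elim=> //= a b s' t' /fg -> _ ->. Qed.

Section Relabel.

Variables (s : nat -> nat) (V : pred nat).
Hypothesis s_inj : {in V &, injective s}.

Definition agree (G1 G2 : vset) := forall v, V v -> G1 v = G2 (s v).

Definition agree_demand (Q : vset -> Prop) (D1 D2 : demand) :=
  forall G1 G2, agree G1 G2 -> Q G2 -> D1 G1 = D2 G2.

Definition leaf_rel Q (C2 : vset) (l1 l2 : vset * demand) :=
  [/\ agree l1.1 l2.1, agree_demand Q l1.2 l2.2 &
      forall w, l2.1 w != C2 w -> exists2 v, V v & s v = w].

Definition relabel (E : seq (nat * nat)) := [seq (s e.1, s e.2) | e <- E].

Lemma leaves_relabel Q E C1 C2 D1 D2 :
  all (fun e => V e.1 && V e.2) E -> agree C1 C2 -> agree_demand Q D1 D2 ->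
  List.Forall2 (leaf_rel Q C2) (leaves E C1 D1) (leaves (relabel E) C2 D2).
Proof.
elim: E C1 C2 D1 D2 => [|e E IH] C1 C2 D1 D2 /=.
  move=> _ hC hD; apply: List.Forall2_cons => //.
  by split => // w; rewrite eqxx.
case/andP => /andP [V1 V2] VE hC hD; apply: List.Forall2_app.
  rewrite -!hC //; case: ifP => _ //.
  apply: List.Forall2_impl (IH _ _ _ _ VE _ hD) => [l1 l2 [h1 h2 h3]|v Vv /=].
    split => // w hw.
    case E1: (l2.1 w != (C2 w || (w == s e.1) || (w == s e.2))); first exact: h3.
    move/negbFE/eqP: E1 hw => ->.
    case: (w =P s e.1) => [->|_]; first by exists e.1.
    case: (w =P s e.2) => [->|_]; first by exists e.2.
    by rewrite !orbF eqxx.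
  by rewrite hC //; congr (_ || _ || _); apply/eqP/eqP => [->|/s_inj ->].
apply: List.Forall2_impl (IH _ _ _ _ VE hC _) => // G1 G2 hG q /=.
by rewrite (hD G1 G2) // !hG.
Qed.

End Relabel.

(* The interface between a hexagon and the rest of the chain is its gluing edge
   [x, y]: whether x and y are covered, and the demand as a truth table
   (r00, r01, r10, r11) in the final coverage of x and y. *)
Definition state := (bool * bool * (bool * bool * bool * bool))%type.

Definition lookup (r : bool * bool * bool * bool) (p q : bool) : bool :=
  let: (r00, r01, r10, r11) := r in
  if p then (if q then r11 else r10) else (if q then r01 else r00).

Definition tabulate (g : bool -> bool -> bool) :=
  (g false false, g false true, g true false, g true true).

Lemma lookup_tabulate g p q : lookup (tabulate g) p q = g p q.
Proof. by case: p; case: q. Qed.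

Definition set2 (F : vset) a b (p q : bool) : vset :=
  fun v => if v == a then p else if v == b then q else F v.

(* Later hexagons only touch a, b and fresh vertices, so the rest of the
   cover of the leaf [l] is final and its demand is a function of the final
   coverage of a and b. *)
Definition state_at a b (l : vset * demand) : state :=
  (l.1 a, l.1 b, tabulate (fun p q => l.2 (set2 l.1 a b p q))).

Definition hex_leaves (s : state) :=
  leaves (hex_edges 0 1 2) (fun v => ((v == 0) && s.1.1) || ((v == 1) && s.1.2))
         (fun G => lookup s.2 (G 0) (G 1)).

Definition successors w (s : state) :=
  map (state_at (next_edge w 2).1 (next_edge w 2).2) (hex_leaves s).

Definition final_count (s : state) :=
  count (fun l : vset * demand => l.2 l.1) (hex_leaves s).

Fixpoint tail_count (ws : seq annel) (s : state) : nat :=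
  if ws is w :: ws' then sumn (map (tail_count ws') (successors w s)) else final_count s.

Definition hex_embed (x y k : nat) (v : nat) :=
  if v == 0 then x else if v == 1 then y else k + (v - 2).

Lemma relabel_hex x y k : relabel (hex_embed x y k) (hex_edges 0 1 2) = hex_edges x y k.
Proof. by rewrite /relabel /hex_embed /= addn0 addn1 addn2 addn3. Qed.

Lemma hex_embed_next x y k w :
  hex_embed x y k (next_edge w 2).1 = (next_edge w k).1 /\
  hex_embed x y k (next_edge w 2).2 = (next_edge w k).2.
Proof. by case: w; rewrite /hex_embed /= ?addn0 ?addn1 ?addn2 ?addn3. Qed.

Lemma hex_embed_inj x y k : x < k -> y < k -> x != y ->
  {in gtn 6 &, injective (hex_embed x y k)}.
Proof.
by move=> xk yk /eqP xy u v hu hv; rewrite /hex_embed; repeat case: ifP => /eqP ?; lia.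
Qed.

Lemma hex_embed_lt x y k u : x < k -> y < k -> u < 6 -> hex_embed x y k u < k + 4.
Proof. by rewrite /hex_embed => xk yk hu; repeat case: ifP => /eqP ?; lia. Qed.

Lemma hex_embed_old x y k u v :
  u < 6 -> v < k -> v != x -> v != y -> hex_embed x y k u != v.
Proof. by rewrite /hex_embed => hu vk vx vy; repeat case: ifP => /eqP ?; lia. Qed.

Definition fixed_below x y k (C G : vset) :=
  forall v, v < k -> v != x -> v != y -> G v = C v.

Definition tail_ready x y k (C : vset) (D : demand) r :=
  [/\ x < k, y < k, x != y, forall v, k <= v -> C v = false &
      forall G, fixed_below x y k C G -> D G = lookup r (G x) (G y)].

Section Hexagon.

Variables (x y k : nat) (C : vset) (D : demand) (r : bool * bool * bool * bool).
Hypothesis ready : tail_ready x y k C D r.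

Definition hex_rel := leaf_rel (hex_embed x y k) (gtn 6) (fixed_below x y k C) C.

Lemma hex_leaves_rel :
  List.Forall2 hex_rel (hex_leaves (C x, C y, r)) (leaves (hex_edges x y k) C D).
Proof.
case: ready => xk yk xy Ck Dr; rewrite -relabel_hex; apply: leaves_relabel => //.
- exact: hex_embed_inj.
- move=> [|[|v]] /= hv; rewrite /hex_embed /= ?orbF //; rewrite Ck //; lia.
- by move=> G1 G2 hG /Dr ->; rewrite (hG 0) // (hG 1).
Qed.

Lemma hex_rel_fixed l1 l2 : hex_rel l1 l2 -> fixed_below x y k C l2.1.
Proof.
case: ready => xk yk xy _ _ [_ _ changed] v vk vx vy; apply/eqP; apply: contraT.
by case/changed => u /= u6 /eqP; rewrite (negbTE (hex_embed_old u6 vk vx vy)).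
Qed.

Lemma hex_rel_accept l1 l2 : hex_rel l1 l2 -> l1.2 l1.1 = l2.2 l2.1.
Proof. by move=> rel; case: (rel) => h1 h2 _; exact: h2 h1 (hex_rel_fixed rel). Qed.

Lemma hex_rel_ready w l1 l2 : hex_rel l1 l2 ->
  let a0 := (next_edge w 2).1 in let b0 := (next_edge w 2).2 in
  let a := (next_edge w k).1 in let b := (next_edge w k).2 in
  state_at a0 b0 l1 = (l2.1 a, l2.1 b, (state_at a0 b0 l1).2) /\
  tail_ready a b (k + 4) l2.1 l2.2 (state_at a0 b0 l1).2.
Proof.
move=> rel a0 b0 a b; have [h1 h2 changed] := rel; have fixed := hex_rel_fixed rel.
case: ready => xk yk xy Ck _; have [ea eb] := hex_embed_next x y k w.
have a06 : a0 < 6 by rewrite /a0; case: (w).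
have b06 : b0 < 6 by rewrite /b0; case: (w).
have ka : k <= a by rewrite /a; case: (w) => /=; lia.
have kb : k <= b by rewrite /b; case: (w) => /=; lia.
split; first by rewrite /state_at /= (h1 a0) // (h1 b0) // ea eb.
split; try by rewrite /a /b; case: (w) => /=; lia.
- move=> v hv; case: (boolP (l2.1 v != C v)) => [/changed [u u6 hu]|/negPn/eqP ->].
    by have := hex_embed_lt xk yk u6; lia.
  by apply: Ck; lia.
move=> G hG; rewrite lookup_tabulate; symmetry; apply: h2.
- move=> u u6; rewrite /set2; case: (u =P a0) => [->|ua]; first by rewrite ea.
  case: (u =P b0) => [->|ub]; first by rewrite eb.
  rewrite h1 // hG //; first exact: hex_embed_lt.
    by apply/eqP => eu; apply: ua; apply: (hex_embed_inj xk yk xy u6 a06); rewrite eu ea.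
  by apply/eqP => eu; apply: ub; apply: (hex_embed_inj xk yk xy u6 b06); rewrite eu eb.
- move=> v vk vx vy; rewrite hG ?fixed //; first lia.
  + by apply/eqP => va; move: vk; rewrite va; lia.
  + by apply/eqP => vb; move: vk; rewrite vb; lia.
Qed.

End Hexagon.

Lemma accepted_tail ws x y k C D r : tail_ready x y k C D r ->
  accepted (tail_edges ws x y k) C D = tail_count ws (C x, C y, r).
Proof.
elim: ws x y k C D r => [|w ws IH] x y k C D r ready; have rel := hex_leaves_rel ready.
  rewrite /accepted /=; symmetry.
  by apply: Forall2_count rel => l1 l2 /(hex_rel_accept ready).
rewrite accepted_cat /=; symmetry; rewrite -map_comp.
apply: Forall2_sumn rel => l1 l2 /(hex_rel_ready ready w) /= [-> ready'].
exact/esym/IH.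
Qed.

Definition first_states := map (state_at 0 1) (leaves hex0_edges xpred0 xpredT).

Lemma accepted_chain n ws : 1 < n ->
  accepted (chain_edges n ws) xpred0 xpredT = sumn (map (tail_count ws) first_states).
Proof.
move=> n1; rewrite /chain_edges leqNgt n1 accepted_cat /first_states -map_comp.
have rel := @leaves_relabel id (gtn 6) (fun u v _ _ => id) (fun _ => True) hex0_edges
  xpred0 xpred0 xpredT xpredT isT (fun _ _ => erefl) (fun _ _ _ _ => erefl).
rewrite (_ : relabel id hex0_edges = hex0_edges) // in rel.
symmetry; apply: Forall2_sumn rel => l1 l2 [h1 h2 changed] /=.
rewrite /state_at /= (h1 0) // (h1 1) //; symmetry; apply: accepted_tail; split => //.
- move=> v v6; apply/negbTE/negP => hv.
  by have [|u /= u6 uv] := changed v; [rewrite hv | lia].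
- move=> G hG; rewrite lookup_tabulate; symmetry; apply: h2 => // u u6; rewrite /set2.
  case: (u =P 0) => [->//|u0]; case: (u =P 1) => [->//|u1].
  by rewrite h1 // hG //; apply/eqP.
Qed.

Definition vec := nat -> nat.

(* A table lists, for each row, the columns of its nonzero entries with multiplicity. *)
Definition apply_table (t : seq (seq nat)) (v : vec) : vec :=
  fun i => sumn (map v (nth [::] t i)).

Definition dot (u v : vec) := sumn [seq u i * v i | i <- iota 0 9].

Definition transpose (t : seq (seq nat)) : seq (seq nat) :=
  [seq flatten [seq [seq i | k <- nth [::] t i & k == j] | i <- iota 0 9] | j <- iota 0 9].

Lemma sumn_map_big (T : Type) (f : T -> nat) s : sumn (map f s) = \sum_(x <- s) f x.
Proof. by rewrite sumnE big_map. Qed.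

Lemma sum_iota_delta (F : nat -> nat) n k : k < n ->
  \sum_(j <- iota 0 n) (if k == j then F j else 0) = F k.
Proof.
move=> kn; rewrite -big_mkcond -big_filter (eq_filter (a2 := pred1 k)) => [|j].
  by rewrite filter_pred1_uniq ?iota_uniq ?mem_iota // big_seq1.
by rewrite /= eq_sym.
Qed.

Lemma dot_transpose t u v : all (all (gtn 9)) t ->
  dot u (apply_table t v) = dot (apply_table (transpose t) u) v.
Proof.
move=> t9; have row9 i : all (gtn 9) (nth [::] t i).
  by case: (ltnP i (size t)) => [/(mem_nth [::])/(allP t9)|/(nth_default [::]) ->].
rewrite /dot /apply_table !sumn_map_big.
transitivity (\sum_(i <- iota 0 9) \sum_(j <- iota 0 9) \sum_(k <- nth [::] t i)
                 (if k == j then u i * v j else 0)).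
  apply: eq_bigr => i _; rewrite sumn_map_big big_distrr exchange_big.
  by apply: eq_big_seq => k /(allP (row9 i)) k9; rewrite sum_iota_delta.
rewrite exchange_big; apply: eq_big_seq => j; rewrite mem_iota /= => j9.
rewrite (nth_map 0) ?size_iota // nth_iota // sumn_map_big big_distrl big_flatten big_map.
by apply: eq_bigr => i _; rewrite big_map big_filter big_mkcond.
Qed.

Lemma dot_le_sym (sigma : nat -> nat) u u' v :
  perm_eq (map sigma (iota 0 9)) (iota 0 9) -> (forall i, v (sigma i) = v i) ->
  (forall i, i < 9 -> u i + u (sigma i) <= u' i + u' (sigma i)) -> dot u v <= dot u' v.
Proof.
move=> sigma_perm v_sym le_uu'.
have dot_sigma x : dot (x \o sigma) v = dot x v.
  rewrite /dot !sumn_map_big -[RHS](perm_big _ sigma_perm) big_map.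
  by apply: eq_bigr => i _; rewrite /= v_sym.
have dot_sum x :
    dot x v + dot (x \o sigma) v = \sum_(i <- iota 0 9) (x i + x (sigma i)) * v i.
  by rewrite /dot !sumn_map_big -big_split; apply: eq_bigr => i _; rewrite mulnDl.
suff : dot u v + dot (u \o sigma) v <= dot u' v + dot (u' \o sigma) v.
  by rewrite !dot_sigma; lia.
rewrite !dot_sum big_seq [X in _ <= X]big_seq; apply: leq_sum => i; rewrite mem_iota => i9.
exact/leq_mul/leqnn/le_uu'.
Qed.

(* Classes of states with the same count: 0..3 when x and y are free and the
   demand is x /\ y, x, y, x \/ y; 4 and 5 when only y is covered and the
   demand is x or nothing; 6 and 7 likewise with x covered; 8 when both are
   covered; 9 when the demand cannot be met; 10 for states never reached. *)
Definition class (s : state) : nat :=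
  match s with
  | (false, false, (false, false, false, true)) => 0
  | (false, false, (false, false, true, true)) => 1
  | (false, false, (false, true, false, true)) => 2
  | (false, false, (false, true, true, true)) => 3
  | (false, true, (_, false, _, true)) => 4
  | (false, true, (_, true, _, true)) => 5
  | (true, false, (_, _, false, true)) => 6
  | (true, false, (_, _, true, true)) => 7
  | (true, true, (_, _, _, true)) => 8
  | (false, false, (false, false, false, false)) | (false, true, (_, false, _, false))
  | (true, false, (_, _, false, false)) | (true, true, (_, _, _, false)) => 9
  | _ => 10
  end.

Definition transfer (w : annel) : seq (seq nat) :=
  match w with
  | Straight => [:: [:: 3; 8]; [:: 3; 5; 8]; [:: 3; 7; 8]; [:: 3; 5; 7; 8]; [:: 2; 5; 8];
                    [:: 2; 5; 6; 8; 8]; [:: 1; 7; 8]; [:: 1; 4; 7; 8; 8]; [:: 0; 4; 6; 8; 8]]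
  | KinkL => [:: [:: 6; 8]; [:: 6; 7; 8]; [:: 0; 4; 6; 8; 8]; [:: 0; 4; 6; 7; 8; 8];
                 [:: 7; 8]; [:: 1; 4; 7; 8; 8]; [:: 2; 5; 8]; [:: 2; 3; 5; 8; 8]; [:: 3; 5; 8]]
  | KinkR => [:: [:: 4; 8]; [:: 0; 4; 6; 8; 8]; [:: 4; 5; 8]; [:: 0; 4; 5; 6; 8; 8];
                 [:: 1; 7; 8]; [:: 1; 3; 7; 8; 8]; [:: 5; 8]; [:: 2; 5; 6; 8; 8]; [:: 3; 7; 8]]
  end.

Lemma successors_class w s : class s < 10 ->
  all (fun t => class t < 10) (successors w s) &&
  perm_eq [seq c <- map class (successors w s) | c < 9] (nth [::] (transfer w) (class s)).
Proof. by case: w; case: s => [[[] []] [[[[] []] []] []]]; vm_compute. Qed.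

Definition terminal : vec := nth 0 [:: 1; 2; 2; 3; 2; 3; 2; 3; 2].

Lemma final_count_class s : class s < 10 -> final_count s = terminal (class s).
Proof. by case: s => [[[] []] [[[[] []] []] []]]; vm_compute. Qed.

Fixpoint counts (ws : seq annel) : vec :=
  if ws is w :: ws' then apply_table (transfer w) (counts ws') else terminal.

Lemma counts_cons w ws : counts (w :: ws) = apply_table (transfer w) (counts ws).
Proof. by []. Qed.

Lemma counts_dead ws i : 9 <= i -> counts ws i = 0.
Proof.
case: ws => [|w ws] i9 /=; first by rewrite /terminal nth_default.
by rewrite /apply_table nth_default //; case: w.
Qed.

Lemma tail_count_counts ws s : class s < 10 -> tail_count ws s = counts ws (class s).
Proof.
elim: ws s => [|w ws IH] s cs /=; first exact: final_count_class.
have /andP [live rows] := successors_class w cs.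
rewrite /apply_table -(perm_sumn (perm_map (counts ws) rows)).
have -> : map (tail_count ws) (successors w s) = map (counts ws \o class) (successors w s).
  by apply/eq_in_map => t /(allP live) /IH.
elim: (successors w s) => //= t ts ->.
by case: ltnP => [|/(counts_dead ws) ->].
Qed.

Definition start : vec := nth 0 [:: 1; 0; 0; 1; 1; 1; 1; 1; 3].

Lemma Psi_chain n ws : 1 < n -> Psi (chain_edges n ws) = dot start (counts ws).
Proof.
move=> n1; rewrite Psi_accepted accepted_chain //.
have live : all (fun s => class s < 10) first_states by vm_compute.
rewrite (eq_in_map _ (counts ws \o class) _).1 => [|s /(allP live) /tail_count_counts //].
have -> : map (counts ws \o class) first_states =
          map (counts ws) [:: 8; 9; 8; 9; 9; 8; 4; 5; 9; 9; 3; 7; 9; 6; 0; 9; 9; 9].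
  by rewrite map_comp; congr map; vm_compute.
rewrite /dot /start /= (counts_dead ws (leqnn 9)); lia.
Qed.

(* Exchanging the roles of x and y permutes the classes. *)
Definition mirror (i : nat) : nat :=
  match i with 1 => 2 | 2 => 1 | 4 => 6 | 6 => 4 | 5 => 7 | 7 => 5 | _ => i end.

Definition half_cone (u : vec) :=
  [/\ u 2 + u 3 + u 7 <= u 0 + u 1 + u 8, u 2 + u 3 <= u 8 &
      u 8 <= u 0 + 3 * u 1 + u 2 + 3 * u 3 + u 4 + u 5 + u 6 + u 7].

Definition in_cone (u : vec) := half_cone u /\ half_cone (fun i => u (mirror i)).

Definition cotransfer (w : annel) : seq (seq nat) :=
  match w with
  | Straight => [:: [:: 8]; [:: 6; 7]; [:: 4; 5]; [:: 0; 1; 2; 3]; [:: 7; 8]; [:: 1; 3; 4; 5];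
                    [:: 5; 8]; [:: 2; 3; 6; 7]; [:: 0; 1; 2; 3; 4; 5; 5; 6; 7; 7; 8; 8]]
  | KinkL => [:: [:: 2; 3]; [:: 5]; [:: 6; 7]; [:: 7; 8]; [:: 2; 3; 5]; [:: 6; 7; 8];
                 [:: 0; 1; 2; 3]; [:: 1; 3; 4; 5]; [:: 0; 1; 2; 2; 3; 3; 4; 5; 5; 6; 7; 7; 8]]
  | KinkR => [:: [:: 1; 3]; [:: 4; 5]; [:: 7]; [:: 5; 8]; [:: 0; 1; 2; 3]; [:: 2; 3; 6; 7];
                 [:: 1; 3; 7]; [:: 4; 5; 8]; [:: 0; 1; 1; 2; 3; 3; 4; 5; 5; 6; 7; 7; 8]]
  end.

Lemma dot_transfer w u v :
  dot u (apply_table (transfer w) v) = dot (apply_table (cotransfer w) u) v.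
Proof.
rewrite dot_transpose; last by case: w.
by congr (dot (apply_table _ u) v); case: w; vm_compute.
Qed.

Lemma in_cone_cotransfer w u : in_cone u -> in_cone (apply_table (cotransfer w) u).
Proof.
case=> -[? ? ?] [] /= ? ? ?.
by case: w; split; split; rewrite /apply_table /=; lia.
Qed.

Lemma mirror_id i : 9 <= i -> mirror i = i.
Proof. by do 9?case: i => [|i] //. Qed.

Lemma counts_polyacene_mirror m i :
  counts (nseq m Straight) (mirror i) = counts (nseq m Straight) i.
Proof.
elim: m i => [|m IH] i; have [i9|/mirror_id -> //] := ltnP i 9.
  by move: i i9; do 9!case=> //.
have rows : perm_eq (nth [::] (transfer Straight) (mirror i))
                    (map mirror (nth [::] (transfer Straight) i)).
  by move: i i9 {IH}; do 9!case=> //.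
rewrite /= /apply_table (perm_sumn (perm_map _ rows)) -map_comp.
by congr sumn; apply: eq_map => j /=; rewrite IH.
Qed.

Lemma kink_le_straight w m u : in_cone u ->
  dot u (apply_table (transfer w) (counts (nseq m Straight))) <=
  dot u (apply_table (transfer Straight) (counts (nseq m Straight))).
Proof.
move=> cone; case: m => [|[|[|m]]]; last first.
  rewrite [nseq _ _]/= !counts_cons !dot_transfer.
  apply: (dot_le_sym (sigma := mirror)) => [|i|i]; first by vm_compute.
    exact: counts_polyacene_mirror.
  case: cone => -[? ? ?] [] /= ? ? ?.
  by case: w; do 9?[case: i => [|i]] => //= _; rewrite /apply_table /=; lia.
all: case: cone => -[? ? ?] [] /= ? ? ?.
all: by case: w; rewrite /dot /apply_table /terminal /=; lia.
Qed.

Lemma counts_le_polyacene u ws : in_cone u ->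
  dot u (counts ws) <= dot u (counts (nseq (size ws) Straight)).
Proof.
elim: ws u => [|w ws IH] u cone //=.
rewrite dot_transfer (leq_trans (IH _ (in_cone_cotransfer w cone))) //.
by rewrite -dot_transfer kink_le_straight.
Qed.

Lemma start_in_cone : in_cone start.
Proof. by []. Qed.

Theorem theorem4p6 (n : nat) (ws : seq annel) :
  1 <= n -> size ws = n - 2 ->
  Psi (chain_edges n ws) <= Psi (polyacene n).
Proof.
move=> n1 hws; have [n2|n_le1] := ltnP 1 n.
  by rewrite /polyacene !Psi_chain // -hws counts_le_polyacene // start_in_cone.
by have -> : n = 1 by lia.
Qed.
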